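(* Let $X$ be a separable Banach space and $(E_n)$ a finite dimensional Markushevich decomposition (FMD) of $X$ with biorthogonal sequence $(F_n)$. The following are equivalent: (1) $(E_n)$ is shrinking, i.e. $\mathrm{span}(F_j:j\in\mathbb N)$ is norm dense in $X^*$; (2) for all $x^*\in X^*$, $\lim_{n\to\infty}\|x^*|_{\mathrm{span}(E_j:j>n)}\|=0$; (3) every bounded sequence $(y_n)$ with $y_n\in\mathrm{span}(E_j:j\in\mathbb N, j\ge n)$ for each $n$ is weakly null.
   Context: A sequence $(E_k)$ of finite dimensional subspaces of $X$ is an FMD of $X$ if, with $F_k=\mathrm{span}(E_j:j\ne k)^\perp=\{f\in X^*: f|_{E_j}=0 \text{ for all } j\neq k\}$ (the biorthogonal sequence), the following hold: (a) $\mathrm{span}(E_k:k\in\mathbb N)$ is dense in $X$; (b) $E_k\cap\overline{\mathrm{span}(E_j:j\ne k)}=\{0\}$ for every $k$; (c) $(F_k)$ is total, i.e. if $x\in X$ and $f(x)=0$ for all $f\in F_k$ and all $k$, then $x=0$. *)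

From HB Require Import structures.
From mathcomp Require Import all_boot all_order all_algebra.
From mathcomp Require Import all_classical all_reals all_analysis.
Set Implicit Arguments. Unset Strict Implicit. Unset Printing Implicit Defensive.
Import Order.TTheory GRing.Theory Num.Theory.
Import numFieldNormedType.Exports.
Local Open Scope classical_set_scope.
Local Open Scope ring_scope.

Definition linspan (R : pzRingType) (V : lmodType R) (A : set V) : set V :=
  [set x | exists (n : nat) (c : 'I_n -> R) (v : 'I_n -> V),
      (forall i, A (v i)) /\ x = \sum_(i < n) c i *: v i].

Definition subspace (R : pzRingType) (V : lmodType R) (E : set V) : Prop :=
  E 0 /\ forall (a : R) (x y : V), E x -> E y -> E (a *: x + y).

Definition findim_subspace (R : pzRingType) (V : lmodType R) (E : set V) : Prop :=
  subspace E /\ exists (n : nat) (v : 'I_n -> V), E = linspan [set v i | i in setT].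

Definition dual (R : realType) (X : normedModType R) : set (X -> R) :=
  [set f | (forall (a : R) (x y : X), f (a *: x + y) = a * f x + f y)
           /\ continuous f].

Definition restr_norm (R : realType) (X : normedModType R) (f : X -> R)
    (A : set X) : R :=
  sup [set `|f x| | x in [set x | A x /\ `|x| <= 1]].

Definition dual_norm (R : realType) (X : normedModType R) (f : X -> R) : R :=
  restr_norm f setT.

Definition separable (T : topologicalType) : Prop :=
  exists D : set T, countable D /\ dense D.

(* Biorthogonal sequence F_k = span(E_j : j <> k)^perp in X^*. *)
Definition biorth (R : realType) (X : normedModType R) (E : nat -> set X)
    (k : nat) : set (X -> R) :=
  [set f | dual f /\ forall j, j <> k -> forall x, E j x -> f x = 0].

Definition FMD (R : realType) (X : normedModType R) (E : nat -> set X) : Prop :=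
  (forall k, findim_subspace (E k)) /\
  dense (linspan (\bigcup_k E k)) /\
  (forall k, E k `&` closure (linspan (\bigcup_(j in [set j | j <> k]) E j))
                        = [set 0]) /\
  (forall x : X, (forall k f, biorth E k f -> f x = 0) -> x = 0).

Definition shrinking (R : realType) (X : normedModType R) (E : nat -> set X) : Prop :=
  forall f, dual f -> forall eps : R, 0 < eps ->
    exists g, linspan (\bigcup_j biorth E j) g /\ dual_norm (f - g) < eps.

Definition weakly_null (R : realType) (X : normedModType R) (y : nat -> X) : Prop :=
  forall f, dual f -> (fun n => f (y n)) @ \oo --> (0 : R).

From Pilot Require Import Defs.
From HB Require Import structures.
From mathcomp Require Import all_boot all_order all_algebra.
From mathcomp Require Import all_classical all_reals all_analysis.
From mathcomp Require Import ring lra.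
Import Order.TTheory GRing.Theory Num.Theory.
Import numFieldNormedType.Exports.
Local Open Scope classical_set_scope.
Local Open Scope ring_scope.
Set Implicit Arguments. Unset Strict Implicit. Unset Printing Implicit Defensive.

(* Write Z_n for span(E_j : j > n).  (1) -> (2): a finite combination g of
   functionals from F_0, ..., F_N vanishes on Z_n once n >= N, so that
   ||f|Z_n|| <= ||f - g||.  (2) -> (3) since y_n lies in Z_(n-1); and if (2)
   failed for some f, the norms ||f|Z_n|| being nonincreasing, unit vectors
   y_n in Z_n with |f y_n| >= eps/2 would contradict (3).
   (2) -> (1): fix n with C := ||f|Z_n|| < eps.  Hahn-Banach, applied one
   vector at a time through the finite dimensional E_0, ..., E_n, extends
   f|Z_n to h on Z_n + E_0 + ... + E_n with |h| <= C ||.||.  Totality of (F_k)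
   makes the restrictions of F_k exhaust the algebraic dual of E_k, so some
   g_k in F_k equals f - h on E_k.  Then f - sum_k g_k agrees with h on the
   dense span of the E_j, hence has norm at most C. *)

(* mathcomp-analysis also uses the name [subspace], for the subspace topology. *)
Local Notation subspace := Defs.subspace.

Section LinearSets.
Variables (K : pzRingType) (V : lmodType K).
Implicit Types (A B U W Z : set V) (E : nat -> set V) (phi : V -> K) (x y : V).

Definition lin_on B phi :=
  forall a x y, B x -> B y -> phi (a *: x + y) = a * phi x + phi y.

Definition sumset U W : set V := [set y | exists u w, U u /\ W w /\ y = u + w].

Definition line x : set V := [set a *: x | a in [set: K]].

Lemma subspaceT : subspace [set: V].
Proof. by []. Qed.

Lemma subspaceZ B a x : subspace B -> B x -> B (a *: x).
Proof. by move=> [B0 BD] Bx; rewrite -[_ *: x]addr0; exact: BD. Qed.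

Lemma subspaceD B x y : subspace B -> B x -> B y -> B (x + y).
Proof. by move=> [_ BD] Bx By; rewrite -[x]scale1r; exact: BD. Qed.

Lemma subspaceN B x : subspace B -> B x -> B (- x).
Proof. by move=> sB Bx; rewrite -scaleN1r; exact: subspaceZ. Qed.

Lemma subspace_sum B n (c : 'I_n -> K) (v : 'I_n -> V) :
  subspace B -> (forall i, B (v i)) -> B (\sum_(i < n) c i *: v i).
Proof.
move=> sB Bv; apply: big_ind => [|x y|i _]; first exact: sB.1.
  exact: subspaceD.
exact: subspaceZ.
Qed.

Lemma linspan_sub A B : subspace B -> A `<=` B -> linspan A `<=` B.
Proof. by move=> sB AB _ [n [c [v [Av ->]]]]; apply: subspace_sum => // i; exact: AB. Qed.

Lemma linspan_subspace A : subspace (linspan A).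
Proof.
split.
  by exists 0%N, (fun _ => 0), (fun _ => 0); split => [[]|]; rewrite ?big_ord0.
move=> a x y [n1 [c1 [v1 [Av1 ->]]]] [n2 [c2 [v2 [Av2 ->]]]].
exists (n1 + n2)%N.
exists (fun i => match fintype.split i with inl j => a * c1 j | inr j => c2 j end).
exists (fun i => match fintype.split i with inl j => v1 j | inr j => v2 j end).
split; first by move=> i; case: (fintype.split i).
rewrite big_split_ord /= scaler_sumr; congr (_ + _); apply: eq_bigr => i _.
  by rewrite (unsplitK (inl _)) scalerA.
by rewrite (unsplitK (inr _)).
Qed.

Lemma sub_linspan A : A `<=` linspan A.
Proof.
move=> x Ax; exists 1%N, (fun _ => 1), (fun _ => x); split => //.
by rewrite big_ord1 scale1r.
Qed.

Lemma linspan_mono A B : A `<=` B -> linspan A `<=` linspan B.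
Proof.
move=> AB; apply: linspan_sub; first exact: linspan_subspace.
by move=> x /AB; exact: sub_linspan.
Qed.

Lemma lin_on0 B phi : B 0 -> lin_on B phi -> phi 0 = 0.
Proof.
move=> B0 lphi; have := lphi (-1) 0 0 B0 B0.
by rewrite scaler0 add0r mulN1r addNr.
Qed.

Lemma lin_onZ B phi a x : subspace B -> lin_on B phi -> B x ->
  phi (a *: x) = a * phi x.
Proof.
move=> sB lphi Bx; rewrite -[a *: x]addr0 lphi //; last exact: sB.1.
by rewrite (lin_on0 sB.1 lphi) addr0.
Qed.

Lemma lin_onD B phi x y : lin_on B phi -> B x -> B y ->
  phi (x + y) = phi x + phi y.
Proof. by move=> lphi Bx By; have := lphi 1 x y Bx By; rewrite scale1r mul1r. Qed.

Lemma lin_onN B phi x : subspace B -> lin_on B phi -> B x -> phi (- x) = - phi x.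
Proof. by move=> sB lphi Bx; rewrite -scaleN1r (lin_onZ _ sB lphi Bx) mulN1r. Qed.

Lemma lin_on_subset B B' phi : B' `<=` B -> lin_on B phi -> lin_on B' phi.
Proof. by move=> BB lphi a x y /BB Bx /BB By; exact: lphi. Qed.

Lemma lin_on_ker_subspace B phi : subspace B -> lin_on B phi ->
  subspace [set x | B x /\ phi x = 0].
Proof.
move=> sB lphi; split; first by split; [exact: sB.1 | exact: lin_on0 sB.1 lphi].
move=> a x y [Bx fx] [By fy]; split; first exact: sB.2.
by rewrite lphi // fx fy mulr0 addr0.
Qed.

Lemma lin_on_linspan_eq0 A B phi : subspace B -> A `<=` B -> lin_on B phi ->
  (forall x, A x -> phi x = 0) -> forall x, linspan A x -> phi x = 0.
Proof.
move=> sB AB lphi A0 x Ax.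
have [] // : [set x | B x /\ phi x = 0] x.
apply: linspan_sub Ax; first exact: lin_on_ker_subspace.
by move=> y Ay; split; [exact: AB | exact: A0].
Qed.

Lemma sumset_subspace U W : subspace U -> subspace W -> subspace (sumset U W).
Proof.
move=> [U0 UD] [W0 WD]; split; first by exists 0, 0; rewrite addr0.
move=> a _ _ [u1 [w1 [U1 [W1 ->]]]] [u2 [w2 [U2 [W2 ->]]]].
exists (a *: u1 + u2), (a *: w1 + w2); split; first exact: UD.
by split; [exact: WD | rewrite scalerDr addrACA].
Qed.

Lemma sumsetl U W : W 0 -> U `<=` sumset U W.
Proof. by move=> W0 u Uu; exists u, 0; rewrite addr0. Qed.

Lemma sumsetr U W : U 0 -> W `<=` sumset U W.
Proof. by move=> U0 w Ww; exists 0, w; rewrite add0r. Qed.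

Lemma line0 x : line x 0.
Proof. by exists 0; rewrite ?scale0r. Qed.

Lemma line_subspace x : subspace (line x).
Proof.
split; first exact: line0.
by move=> a _ _ [b _ <-] [c _ <-]; exists (a * b + c) => //; rewrite scalerDl scalerA.
Qed.

Fixpoint prefix_span (v : nat -> V) m : set V :=
  if m is m'.+1 then sumset (prefix_span v m') (line (v m')) else [set 0].

Lemma prefix_span_subspace v m : subspace (prefix_span v m).
Proof.
elim: m => [|m IH] /=; last exact: sumset_subspace (line_subspace _).
by split=> // a x y -> ->; rewrite scaler0 addr0.
Qed.

Lemma prefix_span0 v m : prefix_span v m 0.
Proof. exact: (prefix_span_subspace v m).1. Qed.

Lemma prefix_spanS v m : prefix_span v m `<=` prefix_span v m.+1.
Proof. exact/sumsetl/line0. Qed.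

Lemma prefix_span_mem v m i : (i < m)%N -> prefix_span v m (v i).
Proof.
elim: m => [//|m IH]; rewrite ltnS leq_eqVlt => /orP [/eqP ->|/IH]; last exact: prefix_spanS.
by apply: sumsetr; [exact: prefix_span0 | exists 1; rewrite ?scale1r].
Qed.

Lemma prefix_span_sub B v m : subspace B -> (forall i, (i < m)%N -> B (v i)) ->
  prefix_span v m `<=` B.
Proof.
move=> sB; elim: m => [|m IH] Bv y /=; first by move->; exact: sB.1.
move=> [z [_ [Sz [[a _ <-] ->]]]]; apply: subspaceD => //.
  by apply: IH Sz => i ltim; apply: Bv; rewrite ltnS ltnW.
by apply: subspaceZ => //; apply: Bv.
Qed.

Fixpoint head_sum Z E k : set V :=
  if k is k'.+1 then sumset (head_sum Z E k') (E k') else Z.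

Lemma head_sum_subspace Z E k : subspace Z -> (forall j, subspace (E j)) ->
  subspace (head_sum Z E k).
Proof. by move=> sZ sE; elim: k => //= k IH; exact: sumset_subspace. Qed.

Lemma head_sum_mono Z E k k' : (forall j, E j 0) -> (k <= k')%N ->
  head_sum Z E k `<=` head_sum Z E k'.
Proof.
move=> E0; elim: k' => [|k' IH]; first by rewrite leqn0 => /eqP ->.
rewrite leq_eqVlt => /orP [/eqP -> //|]; rewrite ltnS => /IH sub x /sub.
exact: sumsetl.
Qed.

Lemma sub_head_sum Z E k : (forall j, E j 0) -> Z `<=` head_sum Z E k.
Proof. by move=> E0 x Zx; apply: (head_sum_mono (Z := Z) E0 (leq0n k)). Qed.

Lemma head_sum_E Z E j k : subspace Z -> (forall j, subspace (E j)) -> (j < k)%N ->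
  E j `<=` head_sum Z E k.
Proof.
move=> sZ sE ltjk x Ejx; apply: (head_sum_mono (fun i => (sE i).1) ltjk) => /=.
by apply: sumsetr Ejx; exact: (head_sum_subspace j sZ sE).1.
Qed.

Lemma findim_prefix_span (F : set V) :
  findim_subspace F -> exists v m, F = prefix_span v m.
Proof.
move=> [sF [n [v ->]]].
pose v' i := if insub i is Some j then v j else 0.
have v'E (j : 'I_n) : v' j = v j by rewrite /v' valK.
exists v', n; rewrite eqEsubset; split.
  apply: linspan_sub; first exact: prefix_span_subspace.
  by move=> _ [j _ <-]; rewrite -v'E; exact/prefix_span_mem/ltn_ord.
apply: prefix_span_sub; first exact: linspan_subspace.
move=> i lt_in; rewrite -[i]/(val (Ordinal lt_in)) v'E.
by apply: sub_linspan; exists (Ordinal lt_in).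
Qed.

End LinearSets.

Section FiniteDuality.
Variables (K : fieldType) (V : lmodType K).
Implicit Types (S : set (V -> K)) (s phi : V -> K) (v : nat -> V).

Definition funspace S :=
  [/\ S (fun=> 0), (forall a s t, S s -> S t -> S (fun x => a * s x + t x))
    & forall s, S s -> lin_on [set: V] s].

Lemma funspace_ker S w : funspace S -> funspace [set s | S s /\ s w = 0].
Proof.
move=> [S0 SD Slin]; split=> [//|a s t [Ss sw] [St tw]|s [Ss _]]; last exact: Slin.
by split; [exact: SD | rewrite /= sw tw mulr0 addr0].
Qed.

Lemma prefix_spanS_eq0 s v m : lin_on [set: V] s ->
  (forall z, prefix_span v m z -> s z = 0) -> s (v m) = 0 ->
  forall z, prefix_span v m.+1 z -> s z = 0.
Proof.
move=> ls s0 sw _ [z [_ [Sz [[a _ <-] ->]]]].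
by rewrite (lin_onD ls) // (lin_onZ _ (subspaceT V) ls) // s0 // sw mulr0 addr0.
Qed.

Lemma prefix_span_bipolar S v m y : funspace S ->
  (forall s, S s -> (forall z, prefix_span v m z -> s z = 0) -> s y = 0) ->
  exists2 z, prefix_span v m z & forall s, S s -> s y = s z.
Proof.
elim: m S y => [|m IH] S y fS Hy; have [S0 SD Slin] := fS.
  exists 0 => // s Ss; have lin0 := lin_on0 (subspaceT V).1 (Slin s Ss).
  by rewrite lin0 Hy // => z /= ->.
set w := v m.
have [[s0 [Ss0 [s0_0 s0w]]]|no_sep] := pselect (exists s0, S s0 /\
    (forall z, prefix_span v m z -> s0 z = 0) /\ s0 w != 0).
- have [z Sz Hz] : exists2 z, prefix_span v m z &
      forall s, [set s | S s /\ s w = 0] s -> s y = s z.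
    apply: IH; first exact: funspace_ker.
    by move=> s [Ss sw] s0z; apply: Hy => //; exact: (prefix_spanS_eq0 (Slin s Ss) s0z sw).
  exists (z + (s0 y / s0 w) *: w).
    by exists z, ((s0 y / s0 w) *: w); do !split => //; exists (s0 y / s0 w).
  move=> s Ss; pose c := s w / s0 w.
  (* [s - c s0] vanishes at [w], so it does not separate [y] from [z]. *)
  have t_ker : [set s | S s /\ s w = 0] (fun x => - c * s0 x + s x).
    by split; [exact: SD | rewrite /c mulNr -mulrA mulVf // mulr1 addNr].
  have /= := Hz _ t_ker; rewrite (s0_0 z Sz) mulr0 add0r.
  have ls := Slin s Ss.
  rewrite (lin_onD ls) // (lin_onZ _ (subspaceT V) ls) // => <-.
  by rewrite /c; field.
- have [z Sz Hz] : exists2 z, prefix_span v m z & forall s, S s -> s y = s z.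
    apply: IH => // s Ss sz; apply: Hy => //; apply: (prefix_spanS_eq0 (Slin s Ss) sz).
    by apply: contrapT => sw; apply: no_sep; exists s; split => //; split => //; exact/eqP.
  by exists z => //; exact: prefix_spanS.
Qed.

Lemma prefix_span_onto S v m phi : funspace S -> lin_on (prefix_span v m) phi ->
  (forall y, prefix_span v m y -> (forall s, S s -> s y = 0) -> phi y = 0) ->
  exists2 s, S s & forall y, prefix_span v m y -> s y = phi y.
Proof.
move=> fS; have [S0 SD Slin] := fS.
elim: m => [|m IH] lphi Hphi.
  by exists (fun=> 0) => // y /= ->; rewrite (lin_on0 _ lphi).
have [s1 Ss1 s1_phi] : exists2 s, S s & forall y, prefix_span v m y -> s y = phi y.
  apply: IH; first exact: lin_on_subset (@prefix_spanS _ _ v m) lphi.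
  by move=> y /prefix_spanS; exact: Hphi.
have sP := prefix_span_subspace v m.+1.
have Pw : prefix_span v m.+1 (v m) := prefix_span_mem v (ltnSn m).
have s_split s y a : S s -> s (y + a *: (v m)) = s y + a * s (v m).
  by move=> /Slin ls; rewrite (lin_onD ls) // (lin_onZ _ (subspaceT V) ls).
have phi_split y a : prefix_span v m y -> phi (y + a *: (v m)) = phi y + a * phi (v m).
  move=> /prefix_spanS Py; rewrite (lin_onD lphi) //; last exact: subspaceZ.
  by rewrite (lin_onZ _ sP lphi).
have [[s0 [Ss0 [s0_0 s0w]]]|no_sep] := pselect (exists s0, S s0 /\
    (forall z, prefix_span v m z -> s0 z = 0) /\ s0 (v m) != 0).
- exists (fun x => (phi (v m) - s1 (v m)) / s0 (v m) * s0 x + s1 x); first exact: SD.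
  move=> _ [y [_ [Py [[a _ <-] ->]]]].
  rewrite /= (s_split s0) // (s_split s1) // phi_split //.
  by rewrite (s0_0 y Py) (s1_phi y Py); field.
- have [x Px s_wx] : exists2 x, prefix_span v m x & forall s, S s -> s (v m) = s x.
    apply: prefix_span_bipolar => // s Ss sz; apply: contrapT => sw.
    by apply: no_sep; exists s; split => //; split => //; exact/eqP.
  have phi_wx : phi (v m) = phi x.
    have Px1 : prefix_span v m.+1 x := prefix_spanS Px.
    have : phi (v m - x) = 0.
      apply: Hphi => [|s Ss]; first by apply: subspaceD => //; exact: subspaceN.
      have ls := Slin s Ss.
      by rewrite (lin_onD ls) // (lin_onN (subspaceT V) ls) // s_wx // subrr.
    rewrite (lin_onD lphi Pw (subspaceN sP Px1)) (lin_onN sP lphi Px1).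
    by move/eqP; rewrite subr_eq0 => /eqP.
  exists s1 => // _ [y [_ [Py [[a _ <-] ->]]]].
  by rewrite s_split // phi_split // phi_wx (s_wx s1) // !s1_phi.
Qed.

End FiniteDuality.

Section LineExtension.
Variables (K : fieldType) (V : lmodType K).
Implicit Types (U : set V) (h : V -> K) (x : V).

Lemma sumset_line_uniq U x u a u' a' : subspace U -> ~ U x -> U u -> U u' ->
  u + a *: x = u' + a' *: x -> (u, a) = (u', a').
Proof.
move=> sU nUx Uu Uu' e; have [aa'|neq] := eqVneq a a'.
  by rewrite aa' in e *; move/addIr: e => ->.
exfalso; apply: nUx.
have -> : x = (a - a')^-1 *: (u' - u).
  apply: (@scalerI _ _ (a - a')); first by rewrite subr_eq0.
  rewrite scalerA mulfV ?subr_eq0 // scale1r scalerBl.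
  have -> : u' = u + a *: x - a' *: x by rewrite e addrK.
  by rewrite addrAC [u + _]addrC addrK.
by apply: subspaceZ => //; apply: subspaceD => //; exact: subspaceN.
Qed.

Lemma sumset_line_coord U x : subspace U -> ~ U x ->
  exists p : V -> V * K, forall u a, U u -> p (u + a *: x) = (u, a).
Proof.
move=> sU nUx.
have [p Hp] : {p : V -> V * K & forall y u a, U u -> y = u + a *: x -> p y = (u, a)}.
  apply: (@choice V (V * K)%type
    (fun y q => forall u a, U u -> y = u + a *: x -> q = (u, a))) => y.
  have [[u [a [Uu ->]]]|none] := pselect (exists u a, U u /\ y = u + a *: x).
    by exists (u, a) => u' a' Uu' /(sumset_line_uniq sU nUx Uu Uu').
  by exists (0, 0) => u a Uu ey; exfalso; apply: none; exists u, a.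
by exists p => u a Uu; exact: Hp.
Qed.

Lemma lin_on_line_ext U x h c : subspace U -> ~ U x -> lin_on U h ->
  exists2 h', lin_on (sumset U (line x)) h' &
    forall u a, U u -> h' (u + a *: x) = h u + a * c.
Proof.
move=> sU nUx lh; have [p Hp] := sumset_line_coord sU nUx.
exists (fun y => h (p y).1 + (p y).2 * c); last by move=> u a Uu; rewrite Hp.
move=> b _ _ [u1 [_ [U1 [[a1 _ <-] ->]]]] [u2 [_ [U2 [[a2 _ <-] ->]]]].
have -> : b *: (u1 + a1 *: x) + (u2 + a2 *: x) = (b *: u1 + u2) + (b * a1 + a2) *: x.
  by rewrite scalerDr scalerA scalerDl addrACA.
by rewrite !Hp //= ?lh //; [ring | exact: sU.2].
Qed.

End LineExtension.

Section HahnBanachStep.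
Variables (R : realType) (X : normedModType R).
Implicit Types (U W : set X) (h : X -> R) (C : R) (x : X).

Definition norm_dominated C U h := forall u, U u -> h u <= C * `|u|.

Definition dominated_extension C U W h h' :=
  [/\ lin_on W h', forall u, U u -> h' u = h u & norm_dominated C W h'].

Lemma norm_dominated_abs U h C u :
  subspace U -> lin_on U h -> norm_dominated C U h -> U u -> `|h u| <= C * `|u|.
Proof.
move=> sU lh hC Uu; have := hC _ (subspaceN sU Uu).
rewrite (lin_onN sU lh Uu) normrN => hNu.
by rewrite ler_norml (hC _ Uu) andbT lerNl.
Qed.

Section Dominated.
Variables (U : set X) (h : X -> R) (C : R).
Hypotheses (C_ge0 : 0 <= C) (sU : subspace U) (lh : lin_on U h)
  (hC : norm_dominated C U h).

(* The sup of the left-hand sides works: [h (u + u') <= C |(u - x) + (u' + x)|]. *)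
Lemma hahn_banach_sandwich x :
  exists c, forall u, U u -> h u - C * `|u - x| <= c /\ c <= C * `|u + x| - h u.
Proof.
have gap u u' : U u -> U u' -> h u - C * `|u - x| <= C * `|u' + x| - h u'.
  move=> Uu Uu'; have := hC (subspaceD sU Uu Uu'); rewrite (lin_onD lh) //.
  have : `|u + u'| <= `|u - x| + `|u' + x|.
    by rewrite -[u + u']addr0 -(addNr x) addrACA; exact: ler_normD.
  by move=> /(ler_wpM2l C_ge0); lra.
pose A := [set h u - C * `|u - x| | u in U].
have A_ub : ubound A (C * `|0 + x| - h 0) by move=> _ [u Uu <-]; exact: gap sU.1.
exists (sup A) => u Uu; split.
  by apply: ub_le_sup; [exists (C * `|0 + x| - h 0) | exists u].
by apply: ge_sup; [exists (h u - C * `|u - x|), u | move=> _ [u' Uu' <-]; exact: gap].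
Qed.

Lemma hahn_banach_sandwich_le x c :
  (forall u, U u -> h u - C * `|u - x| <= c /\ c <= C * `|u + x| - h u) ->
  forall u a, U u -> h u + a * c <= C * `|u + a *: x|.
Proof.
move=> hc u a Uu; have [->|a0] := eqVneq a 0.
  by rewrite scale0r addr0 mul0r addr0; exact: hC.
pose u0 := a^-1 *: u; have Uu0 : U u0 := subspaceZ _ sU Uu.
have eu : u = a *: u0 by rewrite /u0 scalerA mulfV // scale1r.
rewrite eu (lin_onZ _ sU lh) // -(scalerDr a u0 x) normrZ.
have [an|ap|] := ltgtP a 0; last by move/eqP: a0.
- have := (hc _ (subspaceN sU Uu0)).1.
  rewrite (lin_onN sU lh) // -(opprD u0 x) normrN (ltr0_norm an) => ?; nra.
- by have := (hc _ Uu0).2; rewrite (gtr0_norm ap) => ?; nra.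
Qed.

Lemma hahn_banach_line x : exists h', dominated_extension C U (sumset U (line x)) h h'.
Proof.
have [Ux|nUx] := pselect (U x).
  have sub : sumset U (line x) `<=` U.
    by move=> _ [u [_ [Uu [[a _ <-] ->]]]]; apply: subspaceD => //; exact: subspaceZ.
  by exists h; split=> //; [exact: lin_on_subset sub lh | move=> y /sub; exact: hC].
have [c hc] := hahn_banach_sandwich x.
have [h' lh' h'E] := lin_on_line_ext c sU nUx lh.
exists h'; split => // [u Uu | _ [u [_ [Uu [[a _ <-] ->]]]]].
  by have := h'E u 0 Uu; rewrite scale0r addr0 mul0r addr0.
by rewrite h'E //; exact: hahn_banach_sandwich_le.
Qed.

End Dominated.

End HahnBanachStep.


Section HahnBanachFinite.
Variables (R : realType) (X : normedModType R).
Implicit Types (U Z F : set X) (E : nat -> set X) (h : X -> R) (C : R).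

Lemma hahn_banach_prefix_span U h C v m :
  0 <= C -> subspace U -> lin_on U h -> norm_dominated C U h ->
  exists h', dominated_extension C U (sumset U (prefix_span v m)) h h'.
Proof.
move=> C0 sU lh hC; elim: m => [|m [h1 [l1 a1 b1]]].
  have -> : sumset U (prefix_span v 0) = U.
    rewrite eqEsubset; split; last exact: sumsetl.
    by move=> _ [u [w [Uu [w0 ->]]]]; rewrite (w0 : w = 0) addr0.
  by exists h.
have sU1 := sumset_subspace sU (prefix_span_subspace v m).
have [h2 [l2 a2 b2]] := hahn_banach_line C0 sU1 l1 b1 (v m).
have sub : sumset U (prefix_span v m.+1) `<=` sumset (sumset U (prefix_span v m)) (line (v m)).
  move=> _ [u [_ [Uu [[w [l [Pw [Ll ->]]]] ->]]]].
  by exists (u + w), l; split; [exists u, w | split; last rewrite addrA].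
exists h2; split; [exact: lin_on_subset sub l2 | | by move=> y /sub; exact: b2].
by move=> u Uu; rewrite a2 ?a1 //; apply: sumsetl => //; exact: prefix_span0.
Qed.

Lemma hahn_banach_findim U F h C :
  0 <= C -> subspace U -> lin_on U h -> norm_dominated C U h -> findim_subspace F ->
  exists h', dominated_extension C U (sumset U F) h h'.
Proof.
by move=> C0 sU lh hC /findim_prefix_span [v [m ->]]; exact: hahn_banach_prefix_span.
Qed.

Lemma hahn_banach_head_sum Z E h C k :
  0 <= C -> subspace Z -> (forall j, findim_subspace (E j)) ->
  lin_on Z h -> norm_dominated C Z h ->
  exists h', dominated_extension C Z (head_sum Z E k) h h'.
Proof.
move=> C0 sZ fE lh hC; have sE j := (fE j).1.
elim: k => [|k [h1 [l1 a1 b1]]]; first by exists h.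
have [h2 [l2 a2 b2]] :=
  hahn_banach_findim C0 (head_sum_subspace k sZ sE) l1 b1 (fE k).
exists h2; split => // u Zu; rewrite a2 ?a1 //.
by apply: sub_head_sum Zu => j; exact: (sE j).1.
Qed.

End HahnBanachFinite.

Section DualSpace.
Variables (R : realType) (X : normedModType R).
Implicit Types (f g : X -> R) (A W : set X) (x : X).

Lemma dual_lin_on f A : dual f -> lin_on A f.
Proof. by move=> [lf _] a x y _ _; exact: lf. Qed.

Lemma dual0 f : dual f -> f 0 = 0.
Proof. by move=> df; exact: lin_on0 (subspaceT X).1 (dual_lin_on df). Qed.

Lemma dualZ f a x : dual f -> f (a *: x) = a * f x.
Proof. by move=> df; exact: (lin_onZ a (subspaceT X) (dual_lin_on df) I). Qed.

Lemma dual_lincomb f g a : dual f -> dual g -> dual (fun x => a * f x + g x).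
Proof.
move=> [lf cf] [lg cg]; split=> [b x y|x]; first by rewrite lf lg; ring.
apply: continuousD (cg x).
exact: (@continuousM _ _ (fun=> a) f x (@cst_continuous _ _ a x) (cf x)).
Qed.

Lemma dual_subspace : subspace (@dual R X).
Proof.
split; last by move=> a f g df dg; exact: dual_lincomb.
by split=> [a x y|x]; [rewrite mulr0 addr0 | exact: cst_continuous].
Qed.

Lemma dual_sum N (g : nat -> X -> R) : (forall i, (i < N)%N -> dual (g i)) ->
  dual (\sum_(i < N) g i).
Proof.
move=> dg; apply: big_ind => [|f f'|i _]; [exact: dual_subspace.1 | | exact: dg].
exact: subspaceD dual_subspace.
Qed.

Lemma dual_bounded f : dual f -> exists2 K, 0 < K & forall x, `|f x| <= K * `|x|.
Proof.
move=> df; have [_ cf] := df.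
have := cf 0 => /cvgrPdist_lt /(_ 1 ltr01) /nbhs_ballP [e e0 He].
exists (2 / e) => [|x]; first by rewrite divr_gt0.
have [->|x0] := eqVneq x 0; first by rewrite dual0 // !normr0 mulr0.
have nx : 0 < `|x| by rewrite normr_gt0.
pose t := e / 2 / `|x|; have t0 : 0 < t by rewrite /t !divr_gt0.
have : ball (0 : X) e (t *: x).
  rewrite -ball_normE /= sub0r normrN normrZ (gtr0_norm t0) /t divfK ?gt_eqF //.
  by rewrite ltr_pdivrMr // ltr_pMr // ltr1n.
move=> /He /=; rewrite dual0 // sub0r normrN dualZ // normrM (gtr0_norm t0) /t => H.
have : e / 2 / `|x| * `|f x| * (2 / e * `|x|) < 2 / e * `|x|.
  by rewrite -[ltRHS]mul1r ltr_pM2r // mulr_gt0 // divr_gt0.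
have -> : e / 2 / `|x| * `|f x| * (2 / e * `|x|) = `|f x|.
  by field; rewrite ?gt_eqF.
exact: ltW.
Qed.

Lemma restr_norm_ub f A x : dual f -> A x -> `|x| <= 1 -> `|f x| <= restr_norm f A.
Proof.
move=> df Ax x1; have [K K0 HK] := dual_bounded df.
apply: ub_le_sup; last by exists x.
exists K => _ [y [_ y1] <-]; apply: le_trans (HK y) _.
by rewrite -[leRHS]mulr1 ler_wpM2l // ltW.
Qed.

Lemma restr_norm_ge0 f A : dual f -> A 0 -> 0 <= restr_norm f A.
Proof.
by move=> df A0; apply: le_trans (restr_norm_ub df A0 _); rewrite ?normr0 ?normr_ge0.
Qed.

Lemma restr_norm_le f A x : dual f -> subspace A -> A x ->
  `|f x| <= restr_norm f A * `|x|.
Proof.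
move=> df sA Ax; have [->|x0] := eqVneq x 0; first by rewrite dual0 // !normr0 mulr0.
have nx : 0 < `|x| by rewrite normr_gt0.
have := restr_norm_ub df (subspaceZ (`|x|^-1) sA Ax).
rewrite normrZ normfV normr_id mulVf ?gt_eqF // dualZ // normrM normfV normr_id.
by move=> /(_ (lexx _)); rewrite ler_pdivrMl // mulrC.
Qed.

Lemma restr_norm_mono f A B : dual f -> A 0 -> A `<=` B ->
  restr_norm f A <= restr_norm f B.
Proof.
move=> df A0 AB; apply: ge_sup; first by exists `|f 0|, 0; split; rewrite ?normr0.
by move=> _ [z [Az z1] <-]; apply: restr_norm_ub => //; exact: AB.
Qed.

Lemma dual_norm_le f C : (forall x, `|x| <= 1 -> `|f x| <= C) -> dual_norm f <= C.
Proof.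
move=> fC; apply: ge_sup; first by exists `|f 0|, 0; split; rewrite ?normr0.
by move=> _ [y [_ y1] <-]; exact: fC.
Qed.

Lemma closed_dense_setT (T : topologicalType) (P W : set T) :
  closed P -> dense W -> W `<=` P -> P = setT.
Proof.
move=> cP dW WP; apply/seteqP; split => // x _; apply: contrapT => nPx.
have [y [nPy Wy]] := dW (~` P) (ex_intro _ x nPx) (closed_openC cP).
exact: nPy (WP _ Wy).
Qed.

Lemma dual_norm_le_dense f W C : 0 <= C -> dual f -> dense W ->
  (forall w, W w -> `|f w| <= C * `|w|) -> dual_norm f <= C.
Proof.
move=> C0 df dW fW; pose g x := C * `|x| - `|f x|.
have cg : continuous g.
  move=> x; have c1 : {for x, continuous (fun y : X => C * `|y|)}.
    exact: (@continuousM _ _ (fun=> C) (@Num.norm _ X) x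
      (@cst_continuous _ _ C x) (@norm_continuous _ _ x)).
  have c2 : {for x, continuous (fun y => `|f y|)}.
    exact: continuous_comp (df.2 x) (@norm_continuous _ _ _).
  exact: (continuousB c1 c2).
have cP : closed (g @^-1` [set r | 0 <= r]).
  by apply: preimage_closed; [move=> x _; exact: cg | exact: closed_ge].
have /closed_dense_setT/(_ dW) fX := cP.
apply: dual_norm_le => x x1.
have /= : (g @^-1` [set r | 0 <= r]) x by rewrite fX // => w /fW; rewrite /= subr_ge0.
by rewrite subr_ge0 => /le_trans; apply; rewrite ler_piMr.
Qed.

End DualSpace.

Section Decomposition.
Variables (R : realType) (X : normedModType R) (E : nat -> set X).

Definition span_after n := linspan (\bigcup_(j in [set j | (n < j)%N]) E j).
Definition span_from n := linspan (\bigcup_(j in [set j | (n <= j)%N]) E j).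

Definition tail_norms_vanish := forall f, dual f ->
  (fun n => restr_norm f (span_after n)) @ \oo --> (0 : R).

Definition tail_sequences_weakly_null := forall y : nat -> X,
  (exists M : R, forall n, `|y n| <= M) -> (forall n, span_from n (y n)) ->
  weakly_null y.

Lemma span_after_subspace n : subspace (span_after n).
Proof. exact: linspan_subspace. Qed.

Lemma span_after_mono m n : (m <= n)%N -> span_after n `<=` span_after m.
Proof.
by move=> mn; apply: linspan_mono => x [j /= nj Ejx]; exists j => //; exact: leq_ltn_trans nj.
Qed.

Lemma span_from_after m n : (m < n)%N -> span_from n `<=` span_after m.
Proof.
by move=> mn; apply: linspan_mono => x [j /= nj Ejx]; exists j => //; exact: leq_trans nj.
Qed.

Lemma span_after_from n : span_after n `<=` span_from n.
Proof. by apply: linspan_mono => x [j /= nj Ejx]; exists j => //; exact: ltnW. Qed.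

Lemma bigcup_sub_head_sum n : (forall k, subspace (E k)) ->
  \bigcup_k E k `<=` head_sum (span_after n) E n.+1.
Proof.
move=> sE x [j _ Ejx]; have [jn|nj] := leqP j n.
  by apply: head_sum_E Ejx => //; exact: span_after_subspace.
by apply: sub_head_sum => [k|]; [exact: (sE k).1 | apply: sub_linspan; exists j].
Qed.

Lemma biorth_funspace k : funspace (biorth E k).
Proof.
split=> [|a s t [ds s0] [dt t0]|s [ds _]]; last exact: dual_lin_on.
  by split=> [|j _ x _ //]; exact: (@dual_subspace R X).1.
split; first exact: dual_lincomb.
by move=> j jk x Ejx; rewrite (s0 j) // (t0 j) // mulr0 addr0.
Qed.

Lemma biorth_span_after k n g : biorth E k g -> (k <= n)%N ->
  forall z, span_after n z -> g z = 0.
Proof.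
move=> [dg g0] kn; apply: lin_on_linspan_eq0 (subspaceT X) _ (dual_lin_on dg) _ => //.
by move=> x [j /= nj Ejx]; apply: g0 Ejx => jk; rewrite jk ltnNge kn in nj.
Qed.

Lemma sum_biorth_at (g : nat -> X -> R) N j x :
  (forall i, (i < N)%N -> biorth E i (g i)) -> E j x ->
  \sum_(i < N) g i x = if (j < N)%N then g j x else 0.
Proof.
move=> bg Ejx; case: ltnP => jN.
  rewrite (bigD1 (Ordinal jN)) //= big1 ?addr0 // => i neq.
  apply: (bg i (ltn_ord i)).2 Ejx => ji.
  by move/eqP: neq; apply; apply: val_inj; rewrite /= ji.
rewrite big1 // => i _; apply: (bg i (ltn_ord i)).2 Ejx => ji.
by move: jN; rewrite ji leqNgt ltn_ord.
Qed.

Lemma shrinking_tail_norms_vanish : shrinking E -> tail_norms_vanish.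
Proof.
move=> shrE f df; apply/cvgrPdist_lt => eps eps0.
have [g [Fg fg_eps]] := shrE f df eps eps0.
have dg : dual g by apply: linspan_sub Fg; [exact: dual_subspace | move=> h [j _ []]].
have dfg : dual (f - g) := subspaceD (dual_subspace X) df (subspaceN (dual_subspace X) dg).
move: Fg => [N [c [v [Fv gE]]]].
have [kf Hkf] : {kf : 'I_N -> nat & forall i, biorth E (kf i) (v i)}.
  by apply: (@choice _ _ (fun i k => biorth E k (v i))) => i; have [j _ Hj] := Fv i; exists j.
exists (\max_(i < N) kf i)%N => // n /= Kn.
have sZ := span_after_subspace n.
rewrite sub0r normrN ger0_norm; last exact: restr_norm_ge0 df sZ.1.
apply: le_lt_trans fg_eps; apply: ge_sup.
  by exists `|f 0|, 0; split; rewrite ?normr0 //; exact: sZ.1.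
move=> _ [z [Zz z1] <-].
have gz : g z = 0.
  rewrite gE fct_sumE big1 // => i _; change (c i * v i z = 0).
  by rewrite (biorth_span_after (Hkf i) _ Zz) ?mulr0 //; exact: leq_trans (leq_bigmax i) Kn.
by rewrite -[f z]subr0 -gz; exact: restr_norm_ub dfg _ z1.
Qed.

Lemma tail_norms_vanish_weakly_null :
  tail_norms_vanish -> tail_sequences_weakly_null.
Proof.
move=> tnv y [M yM] Py f df; apply/cvgrPdist_lt => eps eps0.
pose M' := Num.max M 1; have M'0 : 0 < M' by rewrite lt_max ltr01 orbT.
have [N _ HN] := (cvgrPdist_lt _ _).1 (tnv f df) _ (divr_gt0 eps0 M'0).
have sZ := span_after_subspace N; have C0 := restr_norm_ge0 df sZ.1.
have := HN N (leqnn N); rewrite /= sub0r normrN ger0_norm // => CN.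
exists N.+1 => // n /= Nn; rewrite sub0r normrN.
apply: le_lt_trans (restr_norm_le df sZ (span_from_after Nn (Py n))) _.
have yM' : `|y n| <= M' by rewrite le_max yM.
by apply: le_lt_trans (ler_wpM2l C0 yM') _; rewrite -ltr_pdivlMr.
Qed.

Lemma weakly_null_tail_norms_vanish :
  tail_sequences_weakly_null -> tail_norms_vanish.
Proof.
move=> wn f df; apply/cvgrPdist_lt => eps eps0; apply: contrapT => far.
have big n : eps <= restr_norm f (span_after n).
  rewrite leNgt; apply/negP => small; apply: far; exists n => // m /= nm.
  have sZ := span_after_subspace m.
  rewrite sub0r normrN ger0_norm; last exact: restr_norm_ge0 df sZ.1.
  exact: le_lt_trans (restr_norm_mono df sZ.1 (span_after_mono nm)) small.
have [y Hy] : {y : nat -> X & forall n,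
    [/\ span_after n (y n), `|y n| <= 1 & eps / 2 < `|f (y n)|]}.
  apply: (@choice _ _ (fun n x =>
    [/\ span_after n x, `|x| <= 1 & eps / 2 < `|f x|])) => n.
  have /sup_gt [] : eps / 2 < restr_norm f (span_after n).
    by apply: lt_le_trans (big n); lra.
    by exists `|f 0|, 0; split; rewrite ?normr0 //; exact: (span_after_subspace n).1.
  by move=> _ [x [Px x1] <-] fx; exists x.
have : (fun n => f (y n)) @ \oo --> 0.
  apply: wn df; first by exists 1 => n; have [] := Hy n.
  by move=> n; have [Py _ _] := Hy n; exact: span_after_from.
move=> /cvgrPdist_lt /(_ (eps / 2) (divr_gt0 eps0 (ltr0Sn _ 1))) [N _ /(_ N (leqnn N))].
by rewrite /= sub0r normrN; have [_ _] := Hy N; lra.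
Qed.

Hypothesis biorth_total : forall x, (forall k f, biorth E k f -> f x = 0) -> x = 0.

(* The other [F j] vanish on [E k], so by totality [F k] separates the points
   of the finite dimensional [E k] and hence restricts onto its whole dual. *)
Lemma biorth_onto k phi : findim_subspace (E k) -> lin_on (E k) phi ->
  exists2 g, biorth E k g & forall x, E k x -> g x = phi x.
Proof.
move=> /findim_prefix_span [v [m Ek]] lphi; rewrite Ek in lphi *.
have := prefix_span_onto (biorth_funspace k) lphi; apply => y Py Fy.
suff -> : y = 0 by exact: lin_on0 (prefix_span0 v m) lphi.
apply: biorth_total => k' f bf; have [ek|nk] := eqVneq k' k.
  by rewrite ek in bf; exact: Fy.
have [_ f0] := bf; apply: (f0 k); first by apply/eqP; rewrite eq_sym.
by rewrite Ek.
Qed.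

Hypotheses (findim_E : forall k, findim_subspace (E k))
  (dense_E : dense (linspan (\bigcup_k E k))).

Lemma biorth_corrections n (phi : X -> R) :
  (forall k, (k <= n)%N -> lin_on (E k) phi) ->
  {g : nat -> X -> R & forall k, (k <= n)%N ->
    biorth E k (g k) /\ forall x, E k x -> g k x = phi x}.
Proof.
move=> lphi; apply: (@choice _ _ (fun k g => (k <= n)%N ->
  biorth E k g /\ forall x, E k x -> g x = phi x)) => k.
have [kn|] := leqP k n; last by exists (fun=> 0).
by have [g bg gE] := biorth_onto (findim_E k) (lphi k kn); exists g.
Qed.

Lemma dual_sub_biorth_sum f (g : nat -> X -> R) N : dual f ->
  (forall i, (i < N)%N -> biorth E i (g i)) -> dual (f - \sum_(i < N) g i).
Proof.
move=> df bg; apply: subspaceD (dual_subspace X) df _.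
by apply/(subspaceN (dual_subspace X))/dual_sum => i lt_iN; exact: (bg i lt_iN).1.
Qed.

Lemma biorth_correction_eq n f h (g : nat -> X -> R) : dual f ->
  lin_on (head_sum (span_after n) E n.+1) h -> (forall u, span_after n u -> h u = f u) ->
  (forall k, (k <= n)%N -> biorth E k (g k) /\ forall x, E k x -> g k x = f x - h x) ->
  forall w, linspan (\bigcup_k E k) w -> (f - \sum_(i < n.+1) g i) w = h w.
Proof.
move=> df lh hf bg w Ew; have sE k := (findim_E k).1.
have dPhi := dual_sub_biorth_sum df (fun i (lt_in : (i < n.+1)%N) => (bg i lt_in).1).
apply/eqP; rewrite -subr_eq0; apply/eqP.
apply: (lin_on_linspan_eq0 (B := head_sum (span_after n) E n.+1)
  (phi := fun x => (f - \sum_(i < n.+1) g i) x - h x) _ _ _ _ Ew).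
- exact/head_sum_subspace/sE/span_after_subspace.
- exact: bigcup_sub_head_sum.
- by move=> a x y Tx Ty; rewrite dPhi.1 lh //; ring.
move=> x [j _ Ejx].
have -> : (f - \sum_(i < n.+1) g i) x = f x - \sum_(i < n.+1) g i x by rewrite /= fct_sumE.
rewrite (sum_biorth_at (N := n.+1) (fun i lt_in => (bg i lt_in).1) Ejx).
case: ltnP => [jn|nj]; first by rewrite (bg j jn).2 //; ring.
by rewrite subr0 hf ?subrr //; apply: sub_linspan; exists j.
Qed.

Lemma tail_norms_vanish_shrinking : tail_norms_vanish -> shrinking E.
Proof.
move=> tnv f df eps eps0; have sE k := (findim_E k).1.
have [n _ /(_ n (leqnn n))] := (cvgrPdist_lt _ _).1 (tnv f df) eps eps0.
have sZ := span_after_subspace n; have C0 := restr_norm_ge0 df sZ.1.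
rewrite /= sub0r normrN ger0_norm //; set C := restr_norm _ _ => Ceps.
pose T := head_sum (span_after n) E n.+1.
have sT : subspace T := head_sum_subspace _ sZ sE.
have [h [lh hf hC]] : exists h, dominated_extension C (span_after n) T f h.
  apply: hahn_banach_head_sum => //; first exact: dual_lin_on.
  by move=> u Zu; apply: le_trans (ler_norm _) (restr_norm_le df sZ Zu).
have lin_fh k : (k <= n)%N -> lin_on (E k) (fun x => f x - h x).
  move=> kn a x y Ex Ey; have ET := head_sum_E sZ sE (kn : (k < n.+1)%N).
  by rewrite /= df.1 lh; [ring | exact: ET | exact: ET].
have [g bg] := biorth_corrections lin_fh.
have Phi_h := biorth_correction_eq df lh hf bg.
exists (\sum_(i < n.+1) g i); split.
  exists n.+1, (fun=> 1), (fun i => g i); split.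
    by move=> i; exists i => //; exact: (bg i (ltn_ord i)).1.
  by apply: eq_bigr => i _; rewrite scale1r.
apply: le_lt_trans Ceps; apply: dual_norm_le_dense C0 _ dense_E _ => [|w Ew].
  exact: dual_sub_biorth_sum df (fun i (lt_in : (i < n.+1)%N) => (bg i lt_in).1).
have Tw : T w := linspan_sub sT (bigcup_sub_head_sum n sE) Ew.
by rewrite Phi_h //; exact: norm_dominated_abs sT lh hC Tw.
Qed.

End Decomposition.

Theorem proposition2p1 (R : realType) (X : completeNormedModType R)
  (E : nat -> set X) :
  separable X -> FMD E ->
  [<-> shrinking E;
       (forall f, dual f ->
          (fun n => restr_norm f (linspan (\bigcup_(j in [set j | (n < j)%N]) E j)))
            @ \oo --> (0 : R));
       (forall y : nat -> X,
          (exists M : R, forall n, `|y n| <= M) ->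
          (forall n, linspan (\bigcup_(j in [set j | (n <= j)%N]) E j) (y n)) ->
          weakly_null y)].
Proof.
move=> _ [findim_E [dense_E [_ total]]]; tfae.
- exact: shrinking_tail_norms_vanish.
- exact: tail_norms_vanish_weakly_null.
- by move=> wn; apply: tail_norms_vanish_shrinking => //; exact: weakly_null_tail_norms_vanish.
Qed.
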